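(* Let $D\ge 1$ and let $\mathcal{X}=\{\boldsymbol{x}_1,\dots,\boldsymbol{x}_n\}\subset\mathbb{R}^D$ be a dataset (points counted with multiplicity), and let $\mathcal{Y}\subset\mathcal{X}$ be a sub-collection such that: (i) $\#(\mathcal{Y})>n-n/(2D+2)$; (ii) there is a nonzero $\boldsymbol{v}\in\mathbb{R}^D$ with $\mathcal{Y}\subset\overline{H(\boldsymbol{0},\boldsymbol{v})}=\{\boldsymbol{x}:\boldsymbol{v}^\top\boldsymbol{x}\ge 0\}$; (iii) $\mathcal{Y}\cap L(\boldsymbol{0},\boldsymbol{v})$ is either $\{\boldsymbol{0}\}$ or empty, where $L(\boldsymbol{0},\boldsymbol{v})=\{\boldsymbol{x}:\boldsymbol{v}^\top\boldsymbol{x}=0\}$. Then $$\mathrm{relint}\big(\mathcal{D}_{1/(2D+2)}(\mathcal{X})\big)\subset\mathrm{conv}(\mathcal{Y})\subset H(\boldsymbol{0},\boldsymbol{v})\cup\{\boldsymbol{0}\},$$ where $H(\boldsymbol{0},\boldsymbol{v})=\{\boldsymbol{x}:\boldsymbol{v}^\top\boldsymbol{x}>0\}$. Moreover, if $\#(\mathcal{Y}\cap L(\boldsymbol{0},\boldsymbol{v}))<n/2$ (counted with multiplicity), then $\mathrm{relint}\big(\mathcal{D}_{1/(2D+2)}(\mathcal{X})\big)\subset H(\boldsymbol{0},\boldsymbol{v})$.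
   Context: Tukey depth of $\boldsymbol{x}\in\mathbb{R}^D$ in $\mathcal{X}=\{\boldsymbol{x}_1,\dots,\boldsymbol{x}_n\}$: $\mathrm{depth}(\boldsymbol{x},\mathcal{X})=\min_{\boldsymbol{u}\in S^{D-1}}\#\{i:\boldsymbol{u}^\top(\boldsymbol{x}_i-\boldsymbol{x})\ge 0\}$. The $\beta$-depth level set is $\mathcal{D}_\beta(\mathcal{X})=\{\boldsymbol{y}\in\mathbb{R}^D:\mathrm{depth}(\boldsymbol{y},\mathcal{X})\ge\beta\,\#(\mathcal{X})\}$. $\mathrm{conv}$ denotes convex hull and $\mathrm{relint}$ relative interior. *)

From HB Require Import structures.
From mathcomp Require Import all_boot all_order all_algebra.
From mathcomp Require Import classical_sets reals.
Set Implicit Arguments. Unset Strict Implicit. Unset Printing Implicit Defensive.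
Import Order.TTheory GRing.Theory Num.Theory.
Local Open Scope classical_set_scope.
Local Open Scope ring_scope.

Definition dotv (R : pzRingType) (D : nat) (u x : 'rV[R]_D) : R :=
  \sum_(j < D) u ord0 j * x ord0 j.

Definition tukey_depth (R : realType) (D n : nat) (X : 'I_n -> 'rV[R]_D)
  (x : 'rV[R]_D) : R :=
  inf [set (#|[set i | 0 <= dotv u (X i - x)]|)%:R | u in [set u | dotv u u = 1]].

Definition depth_level_set (R : realType) (D n : nat) (X : 'I_n -> 'rV[R]_D)
  (beta : R) : set 'rV[R]_D :=
  [set y | beta * n%:R <= tukey_depth X y].

Definition conv_hull (R : realType) (D n : nat) (X : 'I_n -> 'rV[R]_D)
  (Y : {set 'I_n}) : set 'rV[R]_D :=
  [set x | exists lam : 'I_n -> R, (forall i, 0 <= lam i) /\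
     \sum_(i in Y) lam i = 1 /\ x = \sum_(i in Y) lam i *: X i].

Definition aff_hull (R : realType) (D : nat) (S : set 'rV[R]_D) : set 'rV[R]_D :=
  [set x | exists s : seq (R * 'rV[R]_D), (forall p, p \in s -> S p.2) /\
     \sum_(p <- s) p.1 = 1 /\ x = \sum_(p <- s) p.1 *: p.2].

Definition relint (R : realType) (D : nat) (S : set 'rV[R]_D) : set 'rV[R]_D :=
  [set x | S x /\ exists e : R, 0 < e /\
     forall y, aff_hull S y -> dotv (y - x) (y - x) < e * e -> S y].

Definition open_halfspace (R : realType) (D : nat) (v : 'rV[R]_D) : set 'rV[R]_D :=
  [set x | 0 < dotv v x].

From HB Require Import structures.
From mathcomp Require Import all_boot all_order all_algebra.
From mathcomp Require Import classical_sets reals.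
From mathcomp Require Import boolp ring lra.
Import Order.TTheory GRing.Theory Num.Theory.
Local Open Scope classical_set_scope.
Local Open Scope ring_scope.

(* If a point x of depth at least t := n/(2D+2) were outside conv(Y), Farkas'
   lemma would give a unit vector u with u.X_i < u.x for all i in Y; the closed
   halfspace {z | u.(z - x) >= 0} then misses Y, so it contains fewer than t
   data points, contradicting the depth of x. The points of Y on L(0,v) are 0,
   hence conv(Y) lies in H(0,v) u {0}.
   For the last claim only x = 0 must be excluded. More than D t data points
   lie in H(0,v), so a Helly theorem for cones in an open halfspace (proved by
   Radon's argument) yields a point c in the cone spanned by these points minus
   any fewer than t of them. Rescaled so that v.c is the least value of v on
   these points, c has depth at least t. If 0 were in the relative interior of
   the depth region, the region would contain -s c for some s > 0, a point
   outside H(0,v) u {0}. *)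

Section DotProduct.
Context {R : comPzRingType} {k : nat}.
Implicit Types (u x y : 'rV[R]_k).

Lemma dotvC u x : dotv u x = dotv x u.
Proof. by apply: eq_bigr => j _; rewrite mulrC. Qed.

Lemma dotvDr u x y : dotv u (x + y) = dotv u x + dotv u y.
Proof. by rewrite /dotv -big_split; apply: eq_bigr => j _; rewrite mxE mulrDr. Qed.

Lemma dotvZr u (c : R) x : dotv u (c *: x) = c * dotv u x.
Proof. by rewrite /dotv mulr_sumr; apply: eq_bigr => j _; rewrite mxE mulrCA. Qed.

Lemma dotvNr u x : dotv u (- x) = - dotv u x.
Proof. by rewrite -scaleN1r dotvZr mulN1r. Qed.

Lemma dotvBr u x y : dotv u (x - y) = dotv u x - dotv u y.
Proof. by rewrite dotvDr dotvNr. Qed.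

Lemma dotv0r u : dotv u 0 = 0.
Proof. by rewrite -(scale0r 0) dotvZr mul0r. Qed.

Lemma dotv_sumr (I : Type) (r : seq I) (P : pred I) (F : I -> 'rV[R]_k) u :
  dotv u (\sum_(i <- r | P i) F i) = \sum_(i <- r | P i) dotv u (F i).
Proof. exact: (big_morph _ (dotvDr u) (dotv0r u)). Qed.

Lemma dotvZl u (c : R) x : dotv (c *: x) u = c * dotv x u.
Proof. by rewrite dotvC dotvZr dotvC. Qed.

Lemma dotvBl u x y : dotv (x - y) u = dotv x u - dotv y u.
Proof. by rewrite dotvC dotvBr !(dotvC u). Qed.

Lemma dotv0l u : dotv 0 u = 0.
Proof. by rewrite dotvC dotv0r. Qed.

End DotProduct.

Lemma dotv_row_mx (R : comPzRingType) (k l : nat)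
    (a c : 'rV[R]_k) (b d : 'rV[R]_l) :
  dotv (row_mx a b) (row_mx c d) = dotv a c + dotv b d.
Proof.
by rewrite /dotv big_split_ord; congr (_ + _); apply: eq_bigr => j _;
  rewrite ?row_mxEl ?row_mxEr.
Qed.

Section DotPositivity.
Context {R : realDomainType} {k : nat}.
Implicit Types (x : 'rV[R]_k).

Lemma dotvv_ge0 x : 0 <= dotv x x.
Proof. by apply: sumr_ge0 => j _; rewrite -expr2 sqr_ge0. Qed.

Lemma dotvv_eq0 x : (dotv x x == 0) = (x == 0).
Proof.
apply/idP/eqP => [|->]; last by rewrite dotv0r.
rewrite psumr_eq0 => [/allP x0|j _]; last by rewrite -expr2 sqr_ge0.
apply/rowP => j; have := x0 j (mem_index_enum j).
by rewrite mxE /= mulf_eq0 orbb => /eqP.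
Qed.

Lemma dotvv_gt0 x : (0 < dotv x x) = (x != 0).
Proof. by rewrite lt_def dotvv_ge0 dotvv_eq0 andbT. Qed.

End DotPositivity.

Lemma unit_vector_exists (R : pzRingType) {k : nat} :
  (0 < k)%N -> exists u : 'rV[R]_k, dotv u u = 1.
Proof.
move=> k0; exists (\row_j (j == Ordinal k0)%:R).
rewrite /dotv (bigD1 (Ordinal k0)) //= big1 => [|j /negPf]; rewrite !mxE ?eqxx.
  by rewrite mulr1 addr0.
by move=> ->; rewrite mulr0.
Qed.

Lemma normalize_vector {R : rcfType} {k : nat} (w : 'rV[R]_k) : w != 0 ->
  exists2 c : R, 0 < c & dotv (c *: w) (c *: w) = 1.
Proof.
rewrite -dotvv_gt0 => w0; exists (Num.sqrt (dotv w w))^-1.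
  by rewrite invr_gt0 sqrtr_gt0.
by rewrite dotvZl dotvZr mulrA -expr2 exprVn sqr_sqrtr ?ltW // mulVf ?gt_eqF.
Qed.

Definition conic_hull {R : numDomainType} {k : nat} {I : finType}
  (a : I -> 'rV[R]_k) (A : {set I}) : set 'rV[R]_k :=
  [set b | exists2 lam : I -> R, (forall i, 0 <= lam i) &
     b = \sum_(i in A) lam i *: a i].

Section ConicHull.
Context {R : numDomainType} {k : nat} {I : finType}.
Variables (a : I -> 'rV[R]_k) (A : {set I}).

Lemma conic_hull_gen i : i \in A -> conic_hull a A (a i).
Proof.
move=> iA; exists (fun j => (j == i)%:R) => [j|]; first exact: ler0n.
rewrite (big_setD1 i iA) /= eqxx scale1r big1 ?addr0 // => j /setD1P[/negPf -> _].
by rewrite scale0r.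
Qed.

Lemma conic_hullD p q :
  conic_hull a A p -> conic_hull a A q -> conic_hull a A (p + q).
Proof.
move=> [lam lam0 ->] [mu mu0 ->]; exists (fun i => lam i + mu i).
  by move=> i; rewrite addr_ge0.
by rewrite -big_split; apply: eq_bigr => i _; rewrite scalerDl.
Qed.

Lemma conic_hullZ c p : 0 <= c -> conic_hull a A p -> conic_hull a A (c *: p).
Proof.
move=> c0 [lam lam0 ->]; exists (fun i => c * lam i).
  by move=> i; rewrite mulr_ge0.
by rewrite scaler_sumr; apply: eq_bigr => i _; rewrite scalerA.
Qed.

Lemma conic_hullD1 j c b : j \in A -> 0 <= c ->
  conic_hull a (A :\ j) (b - c *: a j) -> conic_hull a A b.
Proof.
move=> jA c0 [lam lam0 hb]; exists (fun i => if i == j then c else lam i).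
  by move=> i; case: eqP.
rewrite (big_setD1 j jA) /= eqxx -[b](subrK (c *: a j)) hb addrC; congr (_ + _).
by apply: eq_bigr => i /setD1P[/negPf ->].
Qed.

End ConicHull.

(* The weights of y sum to at most 1, so y cannot lie strictly above every
   a i in the direction u. *)
Lemma conic_hull_above {R : realDomainType} {k : nat} {I : finType}
    {a : I -> 'rV[R]_k} {A : {set I}} {v u y : 'rV[R]_k} {m : R} :
  conic_hull a A y -> 0 < m -> (forall i, i \in A -> m <= dotv v (a i)) ->
  dotv v y = m -> 0 < dotv u y -> exists2 i, i \in A & dotv u y <= dotv u (a i).
Proof.
move=> [lam lam0 ey] m0 mA vy uy.
have [i /andP[iA hi]|below] := pickP [pred i in A | dotv u y <= dotv u (a i)].
  by exists i.
have below_lt i : i \in A -> dotv u (a i) < dotv u y.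
  by move=> iA; rewrite ltNge; have := below i; rewrite /= iA /= => ->.
pose W := \sum_(i in A) lam i.
have W_le1 : W <= 1.
  rewrite -(ler_pM2l m0) mulr1 -[X in _ <= X]vy ey dotv_sumr /W mulr_sumr.
  by apply: ler_sum => i iA; rewrite dotvZr mulrC ler_wpM2l ?mA.
have terms_ge0 i : i \in A -> 0 <= lam i * (dotv u y - dotv u (a i)).
  by move=> iA; rewrite mulr_ge0 // subr_ge0 ltW ?below_lt.
have sumE :
    \sum_(i in A) lam i * (dotv u y - dotv u (a i)) = W * dotv u y - dotv u y.
  rewrite [in X in _ = _ - X]ey dotv_sumr /W mulr_suml -sumrB.
  by apply: eq_bigr => i _; rewrite dotvZr mulrBr.
have sum0 : \sum_(i in A) lam i * (dotv u y - dotv u (a i)) = 0.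
  apply/eqP; rewrite eq_le sumr_ge0 // andbT sumE subr_le0.
  exact: ler_piMl (ltW uy) W_le1.
have lam_eq0 i : i \in A -> lam i = 0.
  move=> iA; have /eqP := psumr_eq0P terms_ge0 sum0 iA.
  by rewrite mulf_eq0 subr_eq0 (gt_eqF (below_lt i iA)) orbF => /eqP.
move: m0; rewrite -vy ey big1 ?dotv0r ?ltxx // => i iA.
by rewrite lam_eq0 ?scale0r.
Qed.

Section Farkas.
Context {R : realFieldType} {k : nat} {I : finType}.
Implicit Types (a : I -> 'rV[R]_k) (A : {set I}) (b : 'rV[R]_k).

Lemma farkas a A b :
  conic_hull a A b \/
  exists w, (forall i, i \in A -> dotv w (a i) <= 0) /\ 0 < dotv w b.
Proof.
have [N] := ubnP #|A|; elim: N A a b => // N IH A a b ltAN.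
have [->|[j jA]] := set_0Vmem A.
  have [->|b0] := eqVneq b 0; first by left; exists (fun=> 0); rewrite ?big_set0.
  by right; exists b; split => [i|]; rewrite ?inE // dotvv_gt0.
have ltA'N : (#|A :\ j| < N)%N by move: ltAN; rewrite (cardsD1 j A) jA.
have [hb|[w [wa wb]]] := IH _ a b ltA'N.
  by left; apply: (conic_hullD1 a A j 0 b jA (lexx 0)); rewrite scale0r subr0.
have [waj|waj] := lerP (dotv w (a j)) 0.
  right; exists w; split=> // i iA; have [->//|ij] := eqVneq i j.
  by apply: wa; rewrite !inE ij.
pose al := dotv w (a j); have al0 : al != 0 by rewrite gt_eqF.
(* Fourier--Motzkin: eliminate a j along the direction w. *)
pose proj x := al *: x - dotv w x *: a j.
have [[lam lam0 hb]|[w' [wa' wb']]] := IH _ (proj \o a) (proj b) ltA'N.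
  pose S := \sum_(i in A :\ j) lam i * dotv w (a i).
  left; apply: (conic_hullD1 a A j (al^-1 * (dotv w b - S)) b jA).
    apply: mulr_ge0; first by rewrite invr_ge0 ltW.
    rewrite subr_ge0 (le_trans _ (ltW wb)) // /S -oppr_ge0 -sumrN.
    by apply: sumr_ge0 => i /wa wai; rewrite -mulrN mulr_ge0 ?oppr_ge0.
  exists lam => //; apply: (scalerI al0).
  rewrite scalerBr scalerA mulrA mulfV // mul1r.
  have -> : al *: \sum_(i in A :\ j) lam i *: a i = proj b + S *: a j.
    rewrite hb [S *: _]scaler_suml -big_split scaler_sumr; apply: eq_bigr => i _ /=.
    by rewrite /proj scalerBr !scalerA addrNK mulrC.
  by rewrite /proj scalerBl opprB addrA addrAC.
right; exists (al *: w' - dotv w' (a j) *: w).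
have key x : dotv (al *: w' - dotv w' (a j) *: w) x = dotv w' (proj x).
  by rewrite dotvBl dotvBr !dotvZl !dotvZr [dotv w' (a j) * _]mulrC.
split=> [i iA|]; rewrite key //; have [->|ij] := eqVneq i j.
  by rewrite /proj subrr dotv0r.
by apply: wa'; rewrite !inE ij.
Qed.

End Farkas.

Section ConvexHull.
Context {R : realType} {D n : nat}.
Variables (X : 'I_n -> 'rV[R]_D) (Y : {set 'I_n}).

Lemma conv_hull_homogeneous x :
  conic_hull (fun i => row_mx (X i) 1) Y (row_mx x 1) -> conv_hull X Y x.
Proof.
case=> lam lam0 hx; exists lam; split=> //.
have sum_row_mx : \sum_(i in Y) lam i *: row_mx (X i) 1 =
    row_mx (\sum_(i in Y) lam i *: X i) ((\sum_(i in Y) lam i) *: 1).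
  rewrite scaler_suml; apply: (big_rec3 (fun s x y => s = row_mx x y)).
    by rewrite row_mx0.
  by move=> i s a b _ ->; rewrite scale_row_mx add_row_mx.
move: hx; rewrite sum_row_mx => /eq_row_mx[->].
move/(congr1 (fun M : 'rV[R]_1 => M 0 0)).
by rewrite !mxE eqxx mulr1.
Qed.

Lemma separate_from_conv_hull x : ~ conv_hull X Y x ->
  exists w, forall i, i \in Y -> dotv w (X i) < dotv w x.
Proof.
move=> nx; have [hx|[w [wY wx]]] := farkas (fun i => row_mx (X i) 1) Y (row_mx x 1).
  by case: nx; exact: conv_hull_homogeneous.
exists (lsubmx w) => i iY; move: (wY i iY) wx.
by rewrite -[w]hsubmxK !dotv_row_mx row_mxKl => ? ?; lra.
Qed.

Lemma separating_unit_vector x : (0 < D)%N -> ~ conv_hull X Y x ->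
  exists2 u, dotv u u = 1 & forall i, i \in Y -> dotv u (X i) < dotv u x.
Proof.
move=> D0 /separate_from_conv_hull [w sep]; have [w0|w0] := eqVneq w 0.
  have [u uu] := unit_vector_exists R D0; exists u => // i /sep.
  by rewrite w0 !dotv0l ltxx.
have [c c0 cc] := normalize_vector w w0; exists (c *: w) => // i /sep.
by rewrite !dotvZl ltr_pM2l.
Qed.

Lemma conv_hull_sub_halfspace v :
  (forall i, i \in Y -> 0 <= dotv v (X i)) ->
  (forall i, i \in Y -> dotv v (X i) = 0 -> X i = 0) ->
  conv_hull X Y `<=` open_halfspace v `|` [set 0].
Proof.
move=> vY0 vY x [lam [lam0 [_ ->]]].
have terms_ge0 i : i \in Y -> 0 <= lam i * dotv v (X i).
  by move=> iY; rewrite mulr_ge0 ?vY0.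
rewrite /open_halfspace /=.
have -> : dotv v (\sum_(i in Y) lam i *: X i) = \sum_(i in Y) lam i * dotv v (X i).
  by rewrite dotv_sumr; apply: eq_bigr => i _; rewrite dotvZr.
have [|vx0] := ltrP 0 (\sum_(i in Y) lam i * dotv v (X i)); first by left.
right; have /psumr_eq0P sum0 : \sum_(i in Y) lam i * dotv v (X i) = 0.
  by apply/eqP; rewrite eq_le vx0 sumr_ge0.
apply: big1 => i iY; have /eqP := sum0 terms_ge0 i iY.
by rewrite mulf_eq0 => /orP[/eqP->|/eqP/(vY i iY)->]; rewrite ?scale0r ?scaler0.
Qed.

End ConvexHull.

Lemma linear_relation {F : fieldType} {k : nat} {I : finType} {G : {set I}}
    (p : I -> 'rV[F]_k) : (k < #|G|)%N ->
  exists2 lam : I -> F, \sum_(i in G) lam i *: p i = 0 &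
    exists2 i, i \in G & lam i != 0.
Proof.
move=> kG; have [i0 i0G] : exists i0, i0 \in G.
  by apply/card_gt0P; apply: leq_ltn_trans kG.
pose M := \matrix_(j < #|G|) p (enum_val j).
have : kermx M != 0.
  by rewrite kermx_eq0 /row_free ltn_eqF // (leq_ltn_trans (rank_leq_col M)).
case/rowV0Pn => u /sub_kermxP uM /rV0Pn[j uj].
exists (fun i => u 0 (enum_rank_in i0G i)); last first.
  by exists (enum_val j); rewrite ?enum_valP ?enum_valK_in.
rewrite (big_enum_val (fun i => u 0 (enum_rank_in i0G i) *: p i)) -[RHS]uM.
by rewrite mulmx_sum_row; apply: eq_bigr => l _; rewrite enum_valK_in rowK.
Qed.

Lemma signed_linear_relation {R : realFieldType} {k : nat} {I : finType}
    {G : {set I}} {p : I -> 'rV[R]_k} {v : 'rV[R]_k} :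
  (k < #|G|)%N -> (forall i, i \in G -> 0 < dotv v (p i)) ->
  exists lam : I -> R, [/\ \sum_(i in G) lam i *: p i = 0,
    exists2 i, i \in G & 0 < lam i & exists2 i, i \in G & lam i < 0].
Proof.
move=> kG vp; have [lam0 rel0 [i0 i0G nz]] := linear_relation p kG.
have [lam [rel [i iG lpos]]] : exists lam : I -> R,
    \sum_(i in G) lam i *: p i = 0 /\ exists2 i, i \in G & 0 < lam i.
  have [neg|pos] := ltrP (lam0 i0) 0; last first.
    by exists lam0; split=> //; exists i0; rewrite // lt_def nz.
  exists (fun i => - lam0 i); split; last by exists i0; rewrite ?oppr_gt0.
  by under eq_bigr => j _ do rewrite scaleNr; rewrite sumrN rel0 oppr0.
exists lam; split=> //; first by exists i.
have [j /andP[jG lj]|nneg] := pickP [pred j in G | lam j < 0]; first by exists j.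
have terms_ge0 j : j \in G -> 0 <= lam j * dotv v (p j).
  move=> jG; apply: mulr_ge0; last exact/ltW/vp.
  by rewrite leNgt; apply/negP => lj; have := nneg j; rewrite /= jG lj.
have sum0 : \sum_(j in G) lam j * dotv v (p j) = 0.
  by rewrite -[RHS](dotv0r v) -rel dotv_sumr; apply: eq_bigr => j _; rewrite dotvZr.
by move: (psumr_eq0P terms_ge0 sum0 iG) => /eqP; rewrite mulf_eq0 !gt_eqF ?vp.
Qed.

Lemma cone_nonneg_comb (R : numDomainType) (k : nat) (C : set 'rV[R]_k)
    (I : finType) (A : {set I}) (c : I -> R) (p : I -> 'rV[R]_k) :
  (forall p q, C p -> C q -> C (p + q)) ->
  (forall a p, 0 < a -> C p -> C (a *: p)) ->
  (forall i, i \in A -> 0 <= c i) -> (forall i, i \in A -> 0 < c i -> C (p i)) ->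
  (exists2 i, i \in A & 0 < c i) -> C (\sum_(i in A) c i *: p i).
Proof.
move=> CD CZ c0 Cp [i iA ci]; rewrite (big_setD1 i iA) /=.
have Ci : C (c i *: p i) by apply: CZ ci (Cp i iA ci).
have [->|] : let s := \sum_(j in A :\ i) c j *: p j in s = 0 \/ C s.
- apply: (big_ind (fun s => s = 0 \/ C s)); first by left.
    by move=> s1 s2 [->|C1] [->|C2]; rewrite ?addr0 ?add0r; auto.
  move=> j /setD1P[_ jA]; have [->|cj] := eqVneq (c j) 0.
    by rewrite scale0r; left.
  by right; apply: CZ (Cp j jA _); rewrite lt_def cj c0.
- by rewrite addr0.
- exact: CD.
Qed.

Section HellyCones.
Context {R : realFieldType} {k : nat} {I : finType}.
Variables (v : 'rV[R]_k) (C : I -> set 'rV[R]_k).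
Hypotheses (k_gt0 : (0 < k)%N)
  (CD : forall i p q, C i p -> C i q -> C i (p + q))
  (CZ : forall i a p, 0 < a -> C i p -> C i (a *: p))
  (Cv : forall i p, C i p -> 0 < dotv v p).

Lemma radon_common_point (G : {set I}) (p : I -> 'rV[R]_k) : (k < #|G|)%N ->
  (forall i j, i \in G -> j \in G -> j != i -> C j (p i)) ->
  exists q, forall j, j \in G -> C j q.
Proof.
move=> kG Cp.
have vp i : i \in G -> 0 < dotv v (p i).
  move=> iG; have : (0 < #|G :\ i|)%N.
    by apply: leq_trans k_gt0 _; move: kG; rewrite (cardsD1 i) iG.
  by case/card_gt0P => j /setD1P[ji jG]; apply: Cv (Cp i j iG jG ji).
have [lam [rel [ip ipG lip] [in_ inG lin]]] := signed_linear_relation kG vp.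
(* q is a positive combination both of the p i with lam i > 0 and of the p i
   with lam i < 0; each C j contains all the members of one of the two families. *)
pose pos i := Num.max (lam i) 0; pose neg i := Num.max (- lam i) 0.
have pos_neg : \sum_(i in G) pos i *: p i = \sum_(i in G) neg i *: p i.
  apply/eqP; rewrite -subr_eq0 -sumrB; apply/eqP; rewrite -[RHS]rel.
  apply: eq_bigr => i _.
  rewrite -scalerBl /pos /neg; congr (_ *: _).
  case: (leP 0 (lam i)) => li.
    by rewrite max_r ?subr0 // oppr_le0.
  by rewrite max_l ?sub0r ?opprK // oppr_ge0 ltW.
exists (\sum_(i in G) pos i *: p i) => j jG.
have [lj|lj] := leP (lam j) 0.
  apply: cone_nonneg_comb => [||i _|i iG|]; first exact: CD; first exact: CZ.
  - by rewrite le_max lexx orbT.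
  - rewrite lt_max ltxx orbF => li; apply: Cp => //.
    by apply: contraTneq li => <-; rewrite -leNgt.
  - by exists ip; rewrite // lt_max lip.
rewrite pos_neg.
apply: cone_nonneg_comb => [||i _|i iG|]; first exact: CD; first exact: CZ.
- by rewrite le_max lexx orbT.
- rewrite lt_max ltxx orbF oppr_gt0 => li; apply: Cp => //.
  by apply: contraTneq li => <-; rewrite -leNgt ltW.
- by exists in_; rewrite // lt_max oppr_gt0 lin.
Qed.

Lemma helly_cones (F : {set I}) :
  (forall G : {set I}, G \subset F -> (#|G| <= k)%N ->
     exists p, forall i, i \in G -> C i p) ->
  exists p, forall i, i \in F -> C i p.
Proof.
move=> small.
suff: forall G : {set I}, G \subset F -> exists p, forall i, i \in G -> C i p.
  by move/(_ F (subxx F)).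
move=> G; have [N] := ubnP #|G|; elim: N G => // N IH G ltGN GF.
have [Gk|kG] := leqP #|G| k; first exact: small.
have /fin_all_exists[p Cp] :
    forall i, exists q, i \in G -> forall j, j \in G :\ i -> C j q.
  move=> i; have [iG|] := boolP (i \in G); last by exists 0.
  have ltN : (#|G :\ i| < N)%N by move: ltGN; rewrite (cardsD1 i) iG.
  have [q Cq] := IH _ ltN (fintype.subset_trans (subsetDl G [set i]) GF).
  by exists q.
apply: (@radon_common_point G p kG) => i j iG jG ji.
by apply: Cp; rewrite // !inE ji.
Qed.

End HellyCones.

Section TukeyDepth.
Context {R : realType} {D n : nat}.
Variable X : 'I_n -> 'rV[R]_D.

Definition halfspace_count (u x : 'rV[R]_D) : nat :=
  #|[set i | 0 <= dotv u (X i - x)]|.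

Lemma tukey_depth_le_count x u :
  dotv u u = 1 -> tukey_depth X x <= (halfspace_count u x)%:R.
Proof.
move=> uu; apply: ge_inf; last by exists u.
by exists 0 => _ [w _ <-]; exact: ler0n.
Qed.

Lemma tukey_depth_ge x b : (0 < D)%N ->
  (forall u, dotv u u = 1 -> b <= (halfspace_count u x)%:R) -> b <= tukey_depth X x.
Proof.
move=> D0 hb; apply: lb_le_inf => [|_ [u uu <-]]; last exact: hb.
by have [u uu] := unit_vector_exists R D0; exists (halfspace_count u x)%:R, u.
Qed.

Lemma halfspace_count_disjoint (Y : {set 'I_n}) u x :
  (forall i, i \in Y -> dotv u (X i - x) < 0) ->
  (halfspace_count u x + #|Y| <= n)%N.
Proof.
move=> hY; rewrite -[X in (_ <= X)%N](card_ord n) -(cardsC Y) addnC leq_add2l.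
apply/subset_leq_card/fintype.subsetP => i; rewrite !inE => hi.
by apply: contraTN hi => /hY; rewrite ltNge.
Qed.

Lemma depth_level_set_sub_conv_hull (beta : R) (Y : {set 'I_n}) : (0 < D)%N ->
  n%:R - beta * n%:R < #|Y|%:R -> depth_level_set X beta `<=` conv_hull X Y.
Proof.
move=> D0 hY x xD; apply: contrapT => nx.
have [u uu sep] := separating_unit_vector X Y x D0 nx.
have hcount : (halfspace_count u x + #|Y| <= n)%N.
  by apply: halfspace_count_disjoint => i /sep; rewrite dotvBr subr_lt0.
move: hcount xD (tukey_depth_le_count x u uu).
by rewrite -(ler_nat R) natrD /depth_level_set /= => ? ? ?; lra.
Qed.

End TukeyDepth.

Lemma relint_extend {R : realType} {D : nat} {S : set 'rV[R]_D} {x y : 'rV[R]_D} :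
  relint S x -> S y -> exists2 s, 0 < s & S ((1 + s) *: x - s *: y).
Proof.
move=> [Sx [e [e0 he]]] Sy; pose q := dotv (x - y) (x - y).
have q0 : 0 <= q := dotvv_ge0 _.
have q1 : 0 < 1 + q by rewrite ltr_wpDr.
pose s := e / (1 + q); have s0 : 0 < s by rewrite divr_gt0.
have hs : s * (1 + q) = e by rewrite divfK ?gt_eqF.
exists s => //; apply: he.
  exists [:: (1 + s, x); (- s, y)]; split.
    by move=> p; rewrite !inE => /orP[]/eqP-> /=.
  by rewrite !big_cons !big_nil /= !addr0 addrK scaleNr.
have -> : (1 + s) *: x - s *: y - x = s *: (x - y).
  by rewrite scalerDl scale1r scalerBr addrAC [x + _]addrC addrK.
by rewrite dotvZl dotvZr -/q mulrA; nra.
Qed.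

Section DeepPoint.
Context {R : realType} {D n : nat}.
Variables (X : 'I_n -> 'rV[R]_D) (v : 'rV[R]_D).
Hypothesis D_gt0 : (0 < D)%N.

Let P : {set 'I_n} := [set i | 0 < dotv v (X i)].

Lemma card_le_hyperplane_add_halfspace (Y : {set 'I_n}) :
  (forall i, i \in Y -> 0 <= dotv v (X i)) ->
  (#|Y| <= #|[set i in Y | dotv v (X i) == 0%R]| + #|P|)%N.
Proof.
move=> vY; apply: leq_trans (leq_card_setU _ _).1.
apply/subset_leq_card/fintype.subsetP => i iY.
by rewrite !inE iY eq_sym -le_eqVlt vY.
Qed.

(* Any D of the cones share a generator X j: together they omit fewer than
   D t < #|P| points of P. *)
Lemma exists_robust_conic_point (t : R) : 0 < t -> D%:R * t < #|P|%:R ->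
  exists2 c, 0 < dotv v c &
    forall T : {set 'I_n}, #|T|%:R < t -> conic_hull X (P :\: T) c.
Proof.
move=> t0 hP.
pose C (T : {set 'I_n}) p := 0 < dotv v p /\ conic_hull X (P :\: T) p.
pose F : {set {set 'I_n}} := [set T : {set 'I_n} | #|T|%:R < t]%SET.
have CD T p q : C T p -> C T q -> C T (p + q).
  by move=> [vp hp] [vq hq]; split; [rewrite dotvDr addr_gt0 | exact: conic_hullD].
have CZ T c p : 0 < c -> C T p -> C T (c *: p).
  move=> c0 [vp hp]; split; first by rewrite dotvZr mulr_gt0.
  exact: conic_hullZ (ltW c0) hp.
have small (G : {set {set 'I_n}}) : G \subset F -> (#|G| <= D)%N ->
    exists p, forall T, T \in G -> C T p.
  move=> GF GD; have : (#|finset.cover G| < #|P|)%N.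
    rewrite -(ltr_nat R); apply: le_lt_trans hP.
    apply: (@le_trans _ _ (\sum_(T in G) #|T|%:R)).
      by rewrite -natr_sum ler_nat (leq_card_cover G).1.
    apply: (@le_trans _ _ (\sum_(T in G) t)).
      by apply: ler_sum => T /(fintype.subsetP GF); rewrite inE => /ltW.
    by rewrite sumr_const -[t *+ _]mulr_natl ler_pM2r // ler_nat.
  move=> cover_lt; have /subsetPn[j jP jG] : ~~ (P \subset finset.cover G).
    by apply: contraTN cover_lt => /subset_leq_card; rewrite leqNgt.
  exists (X j) => T TG; split; first by rewrite inE in jP.
  apply: conic_hull_gen; rewrite inE jP andbT.
  by apply: contraNN jG => jT; apply/bigcupP; exists T.
have [c Cc] := helly_cones v C D_gt0 CD CZ (fun T p => @proj1 _ _) F small.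
have [vc _] : C finset.set0 c by apply: Cc; rewrite inE cards0.
by exists c => // T hT; apply: (Cc T _).2; rewrite inE.
Qed.

Lemma exists_deep_point_in_halfspace (t : R) : 0 < t -> t <= tukey_depth X 0 ->
  D%:R * t < #|P|%:R -> exists2 y, 0 < dotv v y & t <= tukey_depth X y.
Proof.
move=> t0 d0 hP; have [c vc hc] := exists_robust_conic_point t t0 hP.
have [i0 i0P] : exists i0, i0 \in P.
  apply/card_gt0P; rewrite -(ltr_nat R); apply: le_lt_trans hP.
  by rewrite mulr_ge0 ?ler0n ?ltW.
pose m := dotv v (X [arg min_(i < i0 in P) dotv v (X i)]%O).
have [m0 mP] : 0 < m /\ forall i, i \in P -> m <= dotv v (X i).
  by rewrite /m; case: arg_minP => // i; rewrite inE => ? ?; split.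
pose y := (m / dotv v c) *: c.
have vy : dotv v y = m by rewrite dotvZr divfK ?gt_eqF.
have hy (T : {set 'I_n}) : #|T|%:R < t -> conic_hull X (P :\: T) y.
  by move=> /hc; apply: conic_hullZ; rewrite divr_ge0 ?ltW.
exists y; first by rewrite vy.
apply: tukey_depth_ge => // u uu; have [uy|uy] := leP (dotv u y) 0.
  apply: le_trans d0 (le_trans (tukey_depth_le_count X 0 u uu) _).
  rewrite ler_nat; apply/subset_leq_card/fintype.subsetP => i.
  by rewrite !inE /= !dotvBr dotv0r subr0 => ?; rewrite subr_ge0 (le_trans uy).
(* If fewer than t points of P lay above y in direction u, y would lie in the
   cone of those below it. *)
pose T := [set i in P | dotv u y <= dotv u (X i)]%SET.
apply: (@le_trans _ _ #|T|%:R).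
  rewrite leNgt; apply/negP => /hy yT.
  have mPT i : i \in P :\: T -> m <= dotv v (X i) by case/setDP => /mP.
  have [i] := conic_hull_above yT m0 mPT vy uy.
  by rewrite !inE => /andP[/negP iT iP] hi; apply: iT; rewrite iP.
rewrite ler_nat; apply/subset_leq_card/fintype.subsetP => i.
by rewrite !inE /= dotvBr subr_ge0 => /andP[].
Qed.

End DeepPoint.

Theorem lemma3 (R : realType) (D n : nat) (hD : (1 <= D)%N)
  (X : 'I_n -> 'rV[R]_D) (Y : {set 'I_n}) (v : 'rV[R]_D)
  (hY : (n%:R : R) - n%:R / ((2 * D + 2)%N)%:R < (#|Y|)%:R)
  (hv : v != 0)
  (hYH : forall i, i \in Y -> 0 <= dotv v (X i))
  (hYL : forall i, i \in Y -> dotv v (X i) = 0 -> X i = 0) :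
  (relint (depth_level_set X (((2 * D + 2)%N)%:R)^-1) `<=` conv_hull X Y /\
   conv_hull X Y `<=` open_halfspace v `|` [set 0]) /\
  ((#|[set i in Y | dotv v (X i) == 0]|)%:R < (n%:R : R) / 2 ->
   relint (depth_level_set X (((2 * D + 2)%N)%:R)^-1) `<=` open_halfspace v).
Proof.
set K : R := ((2 * D + 2)%N)%:R in hY *; set t := n%:R / K in hY.
have levelY : depth_level_set X K^-1 `<=` conv_hull X Y.
  by apply: depth_level_set_sub_conv_hull; rewrite // mulrC.
have YH := conv_hull_sub_halfspace X Y v hYH hYL.
split=> [|hZ x xr]; first by split=> // x [/levelY].
have [//|/= x0] := YH x (levelY x xr.1); exfalso; subst x.
have n0 : 0 < n%:R :> R.
  by move: hZ; have := ler0n R #|[set i in Y | dotv v (X i) == 0]|; lra.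
have t0 : 0 < t by rewrite divr_gt0 // ltr0n addn2.
have d0 : t <= tukey_depth X 0 by move: xr.1; rewrite /depth_level_set /= mulrC.
have hP : D%:R * t < #|[set i | 0 < dotv v (X i)]%SET|%:R.
  have := card_le_hyperplane_add_halfspace X v Y hYH; rewrite -(ler_nat R) natrD.
  have Kt : t * K = n%:R by rewrite divfK // pnatr_eq0 addn2.
  have : n%:R = 2 * (D%:R * t) + 2 * t by rewrite -Kt /K natrD natrM; ring.
  by move: hY hZ; rewrite -/t; lra.
have [y vy yD] := exists_deep_point_in_halfspace X v hD t t0 d0 hP.
have yK : depth_level_set X K^-1 y by rewrite /depth_level_set /= mulrC.
have [s s0] := relint_extend xr yK.
rewrite scaler0 add0r => /levelY /YH [] /=.
  by rewrite /open_halfspace /= dotvNr dotvZr oppr_gt0 ltNge mulr_ge0 ?ltW.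
move/(congr1 (dotv v)); rewrite dotvNr dotvZr dotv0r => /eqP.
by rewrite oppr_eq0 mulf_eq0 !gt_eqF.
Qed.
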